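(* Let $s>0$, $x_0>0$, and let $P:[0,\infty)\to\mathbb{R}$ be a $\mathcal{C}^2$, strictly increasing function with $P(0)=0$, $P(x)>0$ for $x>0$, satisfying $\int_{x_0}^{\infty}P(z)z^{-1-2/s}\,dz<\infty$. Let $\gamma_c(x)=\frac{\sqrt{1+4P(x)}-1}{2}$ and consider the solution of \[ \frac{d\gamma_1}{dx}=\frac{\gamma_1(x)+\gamma_1(x)^2-P(x)}{s\,x\,\gamma_1(x)},\qquad \gamma_1(x_0)=\gamma_0, \] with $0<\gamma_0<\gamma_c(x_0)$. Then there is a finite $x_1>x_0$ such that $\gamma_1(x_1)=0$, i.e. the positive solution on $[x_0,\infty)$ ceases to exist at $x_1$ with $\gamma_1(x)\to0$ as $x\to x_1^-$.
   Context: Solutions are taken in the region $x>0$, $\gamma_1>0$ where the right-hand side is regular, as the unique maximal such solution. *)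

From Stdlib Require Import Reals.
From Coquelicot Require Export Coquelicot.
Export Reals.
Open Scope R_scope.

(* P is C^2 on [0, oo) (P is a total function R -> R; derivatives are
   two-sided). *)
Definition C2_on_nonneg (P : R -> R) : Prop :=
  forall x, 0 <= x ->
    ex_derive P x /\ ex_derive (Derive P) x /\
    continuous (Derive (Derive P)) x.

Definition strictly_increasing_nonneg (P : R -> R) : Prop :=
  forall x y, 0 <= x -> x < y -> P x < P y.

Definition gamma_c (P : R -> R) (x : R) : R := (sqrt (1 + 4 * P x) - 1) / 2.

Definition ode_rhs (P : R -> R) (s x g : R) : R :=
  (g + g ^ 2 - P x) / (s * x * g).

Definition is_pos_solution (P : R -> R) (s x0 g0 : R) (g : R -> R) (b : Rbar)
  : Prop :=
  Rbar_lt x0 b /\ g x0 = g0 /\ filterlim g (at_right x0) (locally g0) /\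
  forall x, x0 < x -> Rbar_lt x b ->
    0 < g x /\ is_derive g x (ode_rhs P s x (g x)).

From Stdlib Require Import Reals Lra Psatz Ranalysis5.
From Coquelicot Require Import Coquelicot.
Open Scope R_scope.

(* While [gamma1 + gamma1^2 < P x] the right-hand side is negative, so [gamma1] decreases
   strictly and can serve as the independent variable.  With [t = g0 - gamma1], the inverse
   function [x = X t] solves [X' = s X (g0 - t) / (P X - (g0 - t) - (g0 - t)^2)], whose
   denominator stays above [P x0 - g0 - g0^2 > 0] because [P] increases.  Picard iteration
   solves this regular equation on [0 <= t <= g0]; as [X'] is at most a constant multiple
   of [X], [x1 = X g0] is finite, and [gamma1 = g0 - X^-1] reaches [0] there.  Any positive
   solution agrees with [gamma1] on [(x0, x1)]: the squared difference [w] satisfies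
   [w' = k w] with [k] bounded near [x0] and [w -> 0] at [x0], so [w = 0]; hence no positive
   solution extends beyond [x1]. *)

Definition clamp (lo hi t : R) : R := Rmax lo (Rmin hi t).

Lemma clamp_range lo hi t : lo <= hi -> lo <= clamp lo hi t <= hi.
Proof. intros h; split; [apply Rmax_l | apply Rmax_lub; [lra | apply Rmin_l]]. Qed.

Lemma clamp_id lo hi t : lo <= t <= hi -> clamp lo hi t = t.
Proof. intros h; unfold clamp; rewrite Rmin_right, Rmax_right; lra. Qed.

Lemma clamp_left lo hi t : lo <= hi -> t <= lo -> clamp lo hi t = lo.
Proof. intros h1 h2; unfold clamp; rewrite Rmin_right, Rmax_left; lra. Qed.

Lemma clamp_right lo hi t : lo <= hi -> hi <= t -> clamp lo hi t = hi.
Proof. intros h1 h2; unfold clamp; rewrite Rmin_left, Rmax_right; lra. Qed.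

Lemma clamp_le_self lo hi t : lo <= t -> clamp lo hi t <= t.
Proof. intros h; apply Rmax_lub; [lra | apply Rmin_r]. Qed.

Lemma clamp_increment lo hi t t' : t <= t' ->
  0 <= clamp lo hi t' - clamp lo hi t <= t' - t.
Proof.
intros h; unfold clamp, Rmax, Rmin.
repeat match goal with
| |- context [Rle_dec ?a ?b] => destruct (Rle_dec a b)
| H : context [Rle_dec ?a ?b] |- _ => destruct (Rle_dec a b)
end; lra.
Qed.

Lemma clamp_lipschitz lo hi t t' :
  Rabs (clamp lo hi t - clamp lo hi t') <= Rabs (t - t').
Proof.
destruct (Rle_dec t t') as [h|h].
- pose proof (clamp_increment lo hi t t' h).
  rewrite Rabs_minus_sym, (Rabs_minus_sym t), !Rabs_right; lra.
- pose proof (clamp_increment lo hi t' t ltac:(lra)). rewrite !Rabs_right; lra.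
Qed.

Lemma lipschitz_continuous (f : R -> R) K :
  (forall u v, Rabs (f u - f v) <= K * Rabs (u - v)) -> forall t, continuous f t.
Proof.
intros Hf t. apply filterlim_locally. intros eps.
assert (HK : 0 < Rabs K + 1) by (pose proof (Rabs_pos K); lra).
assert (Hd : 0 < eps / (Rabs K + 1)) by (apply Rdiv_lt_0_compat; [apply cond_pos | lra]).
exists (mkposreal _ Hd). intros u Hu. change (Rabs (u - t) < eps / (Rabs K + 1)) in Hu.
change (Rabs (f u - f t) < eps). eapply Rle_lt_trans; [apply Hf|].
apply Rle_lt_trans with ((Rabs K + 1) * Rabs (u - t)).
- apply Rmult_le_compat_r; [apply Rabs_pos | pose proof (Rle_abs K); lra].
- apply Rmult_lt_reg_l with (/ (Rabs K + 1)); [apply Rinv_0_lt_compat; lra|].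
  rewrite <- Rmult_assoc, Rinv_l, Rmult_1_l by lra. rewrite Rmult_comm. exact Hu.
Qed.

Lemma mean_value_open (f df : R -> R) a b : a < b ->
  (forall x, a < x < b -> is_derive f x (df x)) ->
  (forall x, a <= x <= b -> continuous f x) ->
  exists c, a < c < b /\ f b - f a = df c * (b - a).
Proof.
intros Hab Hd Hc.
assert (pr1 : forall c, a < c < b -> derivable_pt f c)
  by (intros c Hc'; exists (df c); apply is_derive_Reals, Hd, Hc').
assert (pr2 : forall c, a < c < b -> derivable_pt id c) by (intros; apply derivable_pt_id).
destruct (MVT f id a b pr1 pr2 Hab) as [c [Pc H]].
- intros; apply continuity_pt_filterlim, Hc; auto.
- intros; apply derivable_continuous_pt, derivable_pt_id.
- exists c. split; auto.
  rewrite (derive_pt_eq_0 _ _ _ _ (proj1 (is_derive_Reals _ _ _) (Hd c Pc))) in H.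
  rewrite (derive_pt_eq_0 _ _ _ (pr2 c Pc) (derivable_pt_lim_id c)) in H.
  unfold id in H. lra.
Qed.

Lemma C1_lipschitz_on (f : R -> R) a b : a <= b ->
  (forall x, a <= x <= b -> ex_derive f x /\ continuous (Derive f) x) ->
  exists K, 0 <= K /\ forall u v, a <= u <= b -> a <= v <= b ->
    Rabs (f u - f v) <= K * Rabs (u - v).
Proof.
intros Hab Hf.
destruct (continuity_ab_maj (fun x => Rabs (Derive f x)) a b Hab) as [m [Hm _]].
{ intros x Hx. apply continuity_pt_filterlim.
  apply (continuous_comp (Derive f) Rabs); [apply Hf, Hx | apply continuous_Rabs]. }
exists (Rabs (Derive f m)). split; [apply Rabs_pos|].
assert (Hlt : forall u v, a <= u -> v <= b -> u < v ->
          Rabs (f u - f v) <= Rabs (Derive f m) * Rabs (u - v)).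
{ intros u v Hu Hv Huv.
  destruct (mean_value_open f (Derive f) u v Huv) as [c [Hc Heq]].
  - intros x Hx. apply Derive_correct, Hf; lra.
  - intros x Hx. apply (ex_derive_continuous f), Hf; lra.
  - rewrite Rabs_minus_sym, Heq, (Rabs_minus_sym u v), Rabs_mult.
    apply Rmult_le_compat_r; [apply Rabs_pos | apply Hm; lra]. }
intros u v Hu Hv. destruct (Rtotal_order u v) as [h|[h|h]].
- apply Hlt; lra.
- subst. rewrite !Rminus_diag, Rabs_R0. lra.
- rewrite Rabs_minus_sym, (Rabs_minus_sym u v). apply Hlt; lra.
Qed.

Lemma is_lim_seq_div_pow2 K : is_lim_seq (fun n => K / 2 ^ n) 0.
Proof.
apply is_lim_seq_ext with (fun n => K * (/ 2) ^ n).
- intros n. unfold Rdiv. rewrite pow_inv. reflexivity.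
- replace (Finite 0) with (Rbar_mult K 0) by (simpl; f_equal; ring).
  apply is_lim_seq_scal_l, is_lim_seq_geom. rewrite Rabs_right; lra.
Qed.

Lemma div_pow2_small K eps : 0 < eps -> exists N, K / 2 ^ N < eps.
Proof.
intros He. destruct (proj2 (is_lim_seq_spec _ _) (is_lim_seq_div_pow2 K) (mkposreal _ He)) as [N HN].
exists N. specialize (HN N (Nat.le_refl N)). simpl in HN.
rewrite Rminus_0_r in HN. pose proof (Rle_abs (K / 2 ^ N)). lra.
Qed.

Lemma le_of_le_add_div_pow2 a b K : (forall n, a <= b + K / 2 ^ n) -> a <= b.
Proof.
intros H. apply Rle_plus_epsilon. intros eps He.
destruct (div_pow2_small K eps He) as [N HN]. specialize (H N). lra.
Qed.

Lemma eq_of_abs_le_div_pow2 x y K : (forall n, Rabs (x - y) <= K / 2 ^ n) -> x = y.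
Proof.
intros H. apply Rminus_diag_uniq.
destruct (Req_dec (x - y) 0) as [|Hne]; [assumption|].
pose proof (Rabs_pos_lt _ Hne).
assert (Rabs (x - y) <= 0) by (apply (le_of_le_add_div_pow2 _ _ K); intros n; rewrite Rplus_0_l; apply H).
lra.
Qed.

Lemma ex_RInt_continuous_R (f : R -> R) a b :
  (forall z, Rmin a b <= z <= Rmax a b -> continuous f z) -> ex_RInt f a b.
Proof. exact (ex_RInt_continuous (V := R_CompleteNormedModule) f a b). Qed.

Lemma RInt_Rminus (f g : R -> R) a b : ex_RInt f a b -> ex_RInt g a b ->
  RInt (fun x => f x - g x) a b = RInt f a b - RInt g a b.
Proof. intros Hf Hg. exact (RInt_minus f g a b Hf Hg). Qed.

Lemma is_derive_RInt_continuous (f : R -> R) a t : (forall x, continuous f x) ->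
  is_derive (fun t => RInt f a t) t (f t).
Proof.
intros Hf. apply (is_derive_RInt f _ a); [|apply Hf].
apply filter_forall. intros b. apply (RInt_correct (V := R_CompleteNormedModule)).
apply ex_RInt_continuous_R; intros; apply Hf.
Qed.

(** * Global existence by Picard iteration *)

Section Picard.

Variable F : R -> R -> R.
Variables y0 L B : R.
Hypothesis HL : 0 < L.
Hypothesis HB : forall t y, Rabs (F t y) <= B.
Hypothesis HLip : forall t y1 y2, Rabs (F t y1 - F t y2) <= L * Rabs (y1 - y2).
Hypothesis HC : forall y t, continuous (fun t => F t y) t.

Lemma B_nonneg : 0 <= B.
Proof. pose proof (Rabs_pos (F 0 0)). pose proof (HB 0 0). lra. Qed.

Lemma continuous_F_comp u t : continuous u t -> continuous (fun s => F s (u s)) t.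
Proof.
intros Hu. apply filterlim_locally. intros eps.
assert (HeL : 0 < eps / (2 * L)) by (apply Rdiv_lt_0_compat; [apply cond_pos | lra]).
destruct (proj1 (filterlim_locally _ _) (HC (u t) t) (pos_div_2 eps)) as [d1 Hd1].
destruct (proj1 (filterlim_locally _ _) Hu (mkposreal _ HeL)) as [d2 Hd2].
exists (mkposreal _ (Rmin_pos _ _ (cond_pos d1) (cond_pos d2))). intros s Hs.
assert (Hs1 : ball t d1 s) by (eapply ball_le; [apply Rmin_l | exact Hs]).
assert (Hs2 : ball t d2 s) by (eapply ball_le; [apply Rmin_r | exact Hs]).
specialize (Hd1 s Hs1). specialize (Hd2 s Hs2).
change (Rabs (F s (u t) - F t (u t)) < eps / 2) in Hd1.
change (Rabs (u s - u t) < eps / (2 * L)) in Hd2.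
change (Rabs (F s (u s) - F t (u t)) < eps).
assert (Hy : Rabs (F s (u s) - F s (u t)) < eps / 2).
{ eapply Rle_lt_trans; [apply HLip|].
  replace (eps / 2) with (L * (eps / (2 * L))) by (field; lra).
  apply Rmult_lt_compat_l; lra. }
replace (F s (u s) - F t (u t)) with ((F s (u s) - F s (u t)) + (F s (u t) - F t (u t))) by ring.
eapply Rle_lt_trans; [apply Rabs_triang | lra].
Qed.

Fixpoint picard_iter (n : nat) (t : R) : R :=
  match n with
  | O => y0
  | S n => y0 + RInt (fun s => F s (picard_iter n s)) 0 t
  end.

Lemma picard_iter_continuous n t : continuous (picard_iter n) t.
Proof.
revert t; induction n as [|n IH]; intros t; simpl.
- apply continuous_const.
- apply (continuous_plus (fun _ => y0)); [apply continuous_const|].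
  apply (ex_derive_continuous (fun t => RInt (fun s => F s (picard_iter n s)) 0 t)).
  eexists. apply is_derive_RInt_continuous. intros; apply continuous_F_comp, IH.
Qed.

Lemma ex_RInt_F_iter n a b : ex_RInt (fun s => F s (picard_iter n s)) a b.
Proof. apply ex_RInt_continuous_R. intros; apply continuous_F_comp, picard_iter_continuous. Qed.

Lemma picard_iter_lipschitz n t t' :
  Rabs (picard_iter n t - picard_iter n t') <= B * Rabs (t - t').
Proof.
destruct n as [|n]; simpl.
- rewrite Rminus_diag, Rabs_R0. apply Rmult_le_pos; [apply B_nonneg | apply Rabs_pos].
- set (f := fun s => F s (picard_iter n s)).
  replace (y0 + RInt f 0 t - (y0 + RInt f 0 t')) with (RInt f t' t).
  2:{ rewrite <- (RInt_Chasles f t' 0 t), <- (opp_RInt_swap f 0 t') by apply ex_RInt_F_iter.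
      unfold plus, opp; simpl. ring. }
  destruct (Rle_dec t' t) as [h|h].
  + rewrite (Rabs_right (t - t')), Rmult_comm by lra.
    apply abs_RInt_le_const; [lra | apply ex_RInt_F_iter | intros; apply HB].
  + rewrite <- (opp_RInt_swap f) by apply ex_RInt_F_iter. unfold opp; simpl.
    rewrite Rabs_Ropp, Rabs_minus_sym, (Rabs_right (t' - t)), Rmult_comm by lra.
    apply abs_RInt_le_const; [lra | apply ex_RInt_F_iter | intros; apply HB].
Qed.

(* Weighting the error by exp (2 L t) makes every Picard step contract by 1/2 on all
   of [0, oo), without restricting to a short interval. *)
Definition picard_weight t := B / (2 * L) * exp (2 * L * t).

Lemma picard_weight_nonneg t : 0 <= picard_weight t.
Proof.
pose proof B_nonneg. unfold picard_weight.
apply Rmult_le_pos; [apply Rmult_le_pos; [lra | left; apply Rinv_0_lt_compat; lra] |].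
left; apply exp_pos.
Qed.

Lemma picard_weight_le t t' : t <= t' -> picard_weight t <= picard_weight t'.
Proof.
intros h. pose proof B_nonneg. unfold picard_weight.
apply Rmult_le_compat_l; [apply Rmult_le_pos; [lra | left; apply Rinv_0_lt_compat; lra]|].
destruct (Req_dec t t') as [->|]; [lra | left; apply exp_increasing; nra].
Qed.

Lemma is_RInt_exp_weight K t :
  is_RInt (fun s => K * exp (2 * L * s)) 0 t (K / (2 * L) * (exp (2 * L * t) - 1)).
Proof.
replace (K / (2 * L) * (exp (2 * L * t) - 1)) with
  (minus (K / (2 * L) * exp (2 * L * t)) (K / (2 * L) * exp (2 * L * 0)))
  by (unfold minus, plus, opp; simpl; rewrite Rmult_0_r, exp_0; ring).
apply (is_RInt_derive (fun s => K / (2 * L) * exp (2 * L * s))).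
- intros x _. auto_derive; [auto | field; lra].
- intros x _. apply (ex_derive_continuous (fun s => K * exp (2 * L * s))). auto_derive. auto.
Qed.

Lemma picard_iter_step n t : 0 <= t ->
  Rabs (picard_iter (S n) t - picard_iter n t) <= picard_weight t / 2 ^ n.
Proof.
pose proof B_nonneg. revert t. induction n as [|n IH]; intros t Ht.
- simpl. rewrite Rplus_minus_l.
  eapply Rle_trans; [apply abs_RInt_le_const with (M := B);
                      [exact Ht | apply ex_RInt_continuous_R; intros; apply HC | intros; apply HB] |].
  unfold picard_weight. simpl (2 ^ 0). rewrite Rminus_0_r, Rdiv_1_r, Rmult_comm.
  assert (2 * L * t <= exp (2 * L * t)) by (pose proof (exp_ineq1_le (2 * L * t)); lra).
  apply Rle_trans with (B * (exp (2 * L * t) / (2 * L))).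
  + apply Rmult_le_compat_l; [lra|]. apply Rmult_le_reg_r with (2 * L); [lra|].
    unfold Rdiv. rewrite Rmult_assoc, Rinv_l by lra. lra.
  + right. field. lra.
- set (f := fun s => minus (F s (picard_iter (S n) s)) (F s (picard_iter n s))).
  set (K := L * (B / (2 * L)) / 2 ^ n).
  assert (Hp : 0 < 2 ^ n) by (apply pow_lt; lra).
  change (Rabs ((y0 + RInt (fun s => F s (picard_iter (S n) s)) 0 t)
                - (y0 + RInt (fun s => F s (picard_iter n s)) 0 t))
          <= picard_weight t / 2 ^ S n).
  replace (y0 + RInt (fun s => F s (picard_iter (S n) s)) 0 t
           - (y0 + RInt (fun s => F s (picard_iter n s)) 0 t)) with (RInt f 0 t)
    by (unfold f; rewrite (RInt_minus (fun s => F s (picard_iter (S n) s))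
                                      (fun s => F s (picard_iter n s))) by apply ex_RInt_F_iter;
        unfold minus, plus, opp; simpl; ring).
  apply Rle_trans with (K / (2 * L) * (exp (2 * L * t) - 1)).
  + apply (norm_RInt_le (V := R_NormedModule) f (fun s => K * exp (2 * L * s)) 0 t); auto.
    * intros x Hx. eapply Rle_trans; [apply HLip|]. specialize (IH x (proj1 Hx)).
      unfold picard_weight in IH. unfold K.
      apply Rle_trans with (L * (B / (2 * L) * exp (2 * L * x) / 2 ^ n));
        [apply Rmult_le_compat_l; lra | right; field; lra].
    * apply (RInt_correct (V := R_CompleteNormedModule)).
      apply (ex_RInt_minus (V := R_NormedModule)); apply ex_RInt_F_iter.
    * apply is_RInt_exp_weight.
  + unfold K, picard_weight. simpl.
    assert (0 <= B / (2 * L) / (2 * 2 ^ n)) by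
      (apply Rmult_le_pos; [apply Rmult_le_pos; [lra | left; apply Rinv_0_lt_compat; lra]
                           | left; apply Rinv_0_lt_compat; lra]).
    replace (L * (B / (2 * L)) / 2 ^ n / (2 * L) * (exp (2 * L * t) - 1))
      with (B / (2 * L) * exp (2 * L * t) / (2 * 2 ^ n) - B / (2 * L) / (2 * 2 ^ n))
      by (field; lra).
    lra.
Qed.

Lemma picard_iter_cauchy n m t : 0 <= t -> (n <= m)%nat ->
  Rabs (picard_iter m t - picard_iter n t) <= 2 * picard_weight t / 2 ^ n - 2 * picard_weight t / 2 ^ m.
Proof.
intros Ht Hm. induction Hm as [|m Hm IH].
- rewrite !Rminus_diag, Rabs_R0. lra.
- replace (picard_iter (S m) t - picard_iter n t) with
    ((picard_iter (S m) t - picard_iter m t) + (picard_iter m t - picard_iter n t)) by ring.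
  eapply Rle_trans; [apply Rabs_triang|]. pose proof (picard_iter_step m t Ht).
  assert (0 < 2 ^ m) by (apply pow_lt; lra). simpl (2 ^ S m).
  replace (2 * picard_weight t / 2 ^ n - 2 * picard_weight t / (2 * 2 ^ m)) with
    (2 * picard_weight t / 2 ^ n - 2 * picard_weight t / 2 ^ m + picard_weight t / 2 ^ m)
    by (field; split; apply pow_nonzero; lra).
  lra.
Qed.

Lemma picard_iter_cauchy_le n m t : 0 <= t -> (n <= m)%nat ->
  Rabs (picard_iter m t - picard_iter n t) <= 2 * picard_weight t / 2 ^ n.
Proof.
intros Ht Hm. eapply Rle_trans; [apply picard_iter_cauchy; auto|].
assert (0 < 2 ^ m) by (apply pow_lt; lra). pose proof (picard_weight_nonneg t).
assert (0 <= 2 * picard_weight t / 2 ^ m) by (apply Rmult_le_pos; [lra | left; apply Rinv_0_lt_compat; lra]).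
lra.
Qed.

Lemma picard_iter_ex_lim t : 0 <= t -> ex_finite_lim_seq (fun n => picard_iter n t).
Proof.
intros Ht. apply ex_lim_seq_cauchy_corr. intros eps.
destruct (div_pow2_small (4 * picard_weight t) eps (cond_pos eps)) as [N HN].
exists N. intros n m Hn Hm.
pose proof (picard_iter_cauchy_le N n t Ht Hn). pose proof (picard_iter_cauchy_le N m t Ht Hm).
replace (picard_iter n t - picard_iter m t) with
  ((picard_iter n t - picard_iter N t) - (picard_iter m t - picard_iter N t)) by ring.
assert (0 < 2 ^ N) by (apply pow_lt; lra).
replace (4 * picard_weight t / 2 ^ N) with
  (2 * picard_weight t / 2 ^ N + 2 * picard_weight t / 2 ^ N) in HN by (field; lra).
unfold Rminus at 1. eapply Rle_lt_trans; [apply Rabs_triang|]. rewrite Rabs_Ropp. lra.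
Qed.

(* Extended by its value at [0] to negative times, so that it is Lipschitz on all of [R]. *)
Definition picard_limit t := real (Lim_seq (fun n => picard_iter n (Rmax 0 t))).

Lemma picard_limit_bound n t : 0 <= t ->
  Rabs (picard_limit t - picard_iter n t) <= 2 * picard_weight t / 2 ^ n.
Proof.
intros Ht. unfold picard_limit. rewrite Rmax_right by lra.
pose proof (Lim_seq_correct' _ (picard_iter_ex_lim t Ht)) as H.
apply (is_lim_seq_incr_n _ n) in H.
apply (fun H => is_lim_seq_minus' _ _ _ _ H (is_lim_seq_const (picard_iter n t))),
  is_lim_seq_abs in H.
exact (is_lim_seq_le _ _ _ _ (fun m => picard_iter_cauchy_le n (m + n) t Ht ltac:(lia))
         H (is_lim_seq_const _)).
Qed.

Lemma picard_limit_lipschitz t t' :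
  Rabs (picard_limit t - picard_limit t') <= B * Rabs (t - t').
Proof.
assert (Hmax : forall t, picard_limit t = picard_limit (Rmax 0 t))
  by (intros u; unfold picard_limit; rewrite (Rmax_right 0 (Rmax 0 u)) by apply Rmax_l; auto).
rewrite (Hmax t), (Hmax t').
set (u := Rmax 0 t). set (u' := Rmax 0 t').
assert (Hu : 0 <= u) by apply Rmax_l. assert (Hu' : 0 <= u') by apply Rmax_l.
apply Rle_trans with (B * Rabs (u - u')).
2:{ apply Rmult_le_compat_l; [apply B_nonneg|]. unfold u, u', Rmax.
    destruct (Rle_dec 0 t), (Rle_dec 0 t'); unfold Rabs;
      repeat match goal with |- context [Rcase_abs ?x] => destruct (Rcase_abs x) end; lra. }
apply (le_of_le_add_div_pow2 _ _ (2 * picard_weight u + 2 * picard_weight u')). intros n.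
pose proof (picard_limit_bound n u Hu). pose proof (picard_limit_bound n u' Hu').
pose proof (picard_iter_lipschitz n u u').
assert (0 < 2 ^ n) by (apply pow_lt; lra).
replace ((2 * picard_weight u + 2 * picard_weight u') / 2 ^ n) with
  (2 * picard_weight u / 2 ^ n + 2 * picard_weight u' / 2 ^ n) by (field; lra).
replace (picard_limit u - picard_limit u') with
  ((picard_limit u - picard_iter n u) + (picard_iter n u - picard_iter n u')
   - (picard_limit u' - picard_iter n u')) by ring.
unfold Rminus at 1. eapply Rle_trans; [apply Rabs_triang|]. rewrite Rabs_Ropp.
pose proof (Rabs_triang (picard_limit u - picard_iter n u) (picard_iter n u - picard_iter n u')).
lra.
Qed.

Lemma picard_limit_continuous t : continuous picard_limit t.
Proof. apply (lipschitz_continuous _ B), picard_limit_lipschitz. Qed.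

Lemma continuous_F_limit t : continuous (fun s => F s (picard_limit s)) t.
Proof. apply continuous_F_comp, picard_limit_continuous. Qed.

Lemma picard_limit_fixpoint t : 0 <= t ->
  picard_limit t = y0 + RInt (fun s => F s (picard_limit s)) 0 t.
Proof.
intros Ht. apply (eq_of_abs_le_div_pow2 _ _ (2 * picard_weight t * (1 + L * t))). intros n.
assert (Hp : 0 < 2 ^ n) by (apply pow_lt; lra). pose proof (picard_weight_nonneg t).
set (I1 := RInt (fun s => F s (picard_iter n s)) 0 t).
set (I2 := RInt (fun s => F s (picard_limit s)) 0 t).
assert (Hiter : Rabs (picard_limit t - (y0 + I1)) <= 2 * picard_weight t / 2 ^ n).
{ pose proof (picard_limit_bound (S n) t Ht) as Hb. change (picard_iter (S n) t) with (y0 + I1) in Hb.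
  change (2 ^ S n) with (2 * 2 ^ n) in Hb.
  eapply Rle_trans; [exact Hb|].
  apply Rmult_le_compat_l; [lra | apply Rinv_le_contravar; lra]. }
assert (Hint : Rabs (I1 - I2) <= (t - 0) * (L * (2 * picard_weight t / 2 ^ n))).
{ assert (HG : ex_RInt (fun s => F s (picard_limit s)) 0 t)
    by (apply ex_RInt_continuous_R; intros; apply continuous_F_limit).
  unfold I1, I2. rewrite <- (RInt_Rminus _ _ _ _ (ex_RInt_F_iter n 0 t) HG).
  apply abs_RInt_le_const;
    [exact Ht | apply (ex_RInt_minus (V := R_NormedModule)); [apply ex_RInt_F_iter | exact HG]|].
  intros s Hs. eapply Rle_trans; [apply HLip|]. apply Rmult_le_compat_l; [lra|].
  rewrite Rabs_minus_sym. eapply Rle_trans; [apply picard_limit_bound; lra|].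
  apply Rmult_le_compat_r; [left; apply Rinv_0_lt_compat; lra|].
  apply Rmult_le_compat_l, picard_weight_le; lra. }
replace (2 * picard_weight t * (1 + L * t) / 2 ^ n) with
  (2 * picard_weight t / 2 ^ n + (t - 0) * (L * (2 * picard_weight t / 2 ^ n))) by (field; lra).
replace (picard_limit t - (y0 + I2)) with ((picard_limit t - (y0 + I1)) + (I1 - I2)) by ring.
eapply Rle_trans; [apply Rabs_triang | lra].
Qed.

End Picard.

Theorem global_picard (F : R -> R -> R) (y0 L B : R) : 0 < L ->
  (forall t y, Rabs (F t y) <= B) ->
  (forall t y1 y2, Rabs (F t y1 - F t y2) <= L * Rabs (y1 - y2)) ->
  (forall y t, continuous (fun t => F t y) t) ->
  exists y : R -> R, y 0 = y0 /\ (forall t, continuous y t) /\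
    (forall t, 0 < t -> is_derive y t (F t (y t))).
Proof.
intros HL HB HLip HC. exists (picard_limit F y0).
split; [|split].
- rewrite (picard_limit_fixpoint F y0 L B) by (auto; lra).
  rewrite RInt_point. unfold zero; simpl; ring.
- apply (picard_limit_continuous F y0 L B); auto.
- intros t Ht. apply (is_derive_ext_loc (fun u => y0 + RInt (fun s => F s (picard_limit F y0 s)) 0 u)).
  + exists (mkposreal t Ht). intros u Hu. change (Rabs (u - t) < t) in Hu.
    rewrite (picard_limit_fixpoint F y0 L B); auto.
    apply Rabs_lt_between in Hu; lra.
  + replace (F t (picard_limit F y0 t)) with (plus 0 (F t (picard_limit F y0 t)))
      by (unfold plus; simpl; ring).
    apply (is_derive_plus (fun _ => y0)); [apply (is_derive_const y0)|].
    apply (is_derive_RInt_continuous (fun s => F s (picard_limit F y0 s))).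
    intros; apply (continuous_F_limit F y0 L B); auto.
Qed.

Lemma filterlim_at_right_continuous (f : R -> R) x :
  continuous f x -> filterlim f (at_right x) (locally (f x)).
Proof.
intros H. apply (filterlim_filter_le_1 (F := locally x) f); [|exact H].
intros Q [d Hd]. exists d. intros y Hy _. exact (Hd y Hy).
Qed.

Lemma filterlim_at_left_continuous (f : R -> R) x :
  continuous f x -> filterlim f (at_left x) (locally (f x)).
Proof.
intros H. apply (filterlim_filter_le_1 (F := locally x) f); [|exact H].
intros Q [d Hd]. exists d. intros y Hy _. exact (Hd y Hy).
Qed.

Lemma filterlim_sqr_sub {T : Type} {F : (T -> Prop) -> Prop} {FF : Filter F}
  (f g : T -> R) l :
  filterlim f F (locally l) -> filterlim g F (locally l) ->
  filterlim (fun x => (f x - g x) ^ 2) F (locally 0).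
Proof.
intros Hf Hg. apply filterlim_locally. intros eps.
set (r := Rmin 1 (eps / 4)).
assert (Hr : 0 < r) by (apply Rmin_pos; [lra | pose proof (cond_pos eps); lra]).
assert (Hr1 : r <= 1) by apply Rmin_l. assert (Hr4 : r <= eps / 4) by apply Rmin_r.
apply (filter_imp (fun x => Rabs (f x - l) < r /\ Rabs (g x - l) < r)).
- intros x [H1 H2]. change (Rabs ((f x - g x) ^ 2 - 0) < eps).
  rewrite Rminus_0_r, <- RPow_abs.
  assert (Rabs (f x - g x) < 2 * r).
  { replace (f x - g x) with ((f x - l) - (g x - l)) by ring.
    unfold Rminus at 1. eapply Rle_lt_trans; [apply Rabs_triang|]. rewrite Rabs_Ropp. lra. }
  pose proof (Rabs_pos (f x - g x)). nra.
- apply filter_and; [apply (proj1 (filterlim_locally f l) Hf (mkposreal r Hr))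
                   | apply (proj1 (filterlim_locally g l) Hg (mkposreal r Hr))].
Qed.

Lemma filterlim_at_right_ge_half (f g : R -> R) a b l : a < b -> 0 < l ->
  filterlim f (at_right a) (locally l) -> filterlim g (at_right a) (locally l) ->
  exists c, a < c < b /\ forall y, a < y <= c -> l / 2 <= f y /\ l / 2 <= g y.
Proof.
intros Hab Hl Hf Hg. assert (Hhalf : 0 < l / 2) by lra.
destruct (filter_and _ _ (proj1 (filterlim_locally _ _) Hf (mkposreal _ Hhalf))
                         (proj1 (filterlim_locally _ _) Hg (mkposreal _ Hhalf))) as [d Hd].
pose proof (Rmin_l d (b - a)). pose proof (Rmin_r d (b - a)).
pose proof (Rmin_pos d (b - a) (cond_pos d) ltac:(lra)).
exists (a + Rmin d (b - a) / 2). split; [lra|]. intros y Hy.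
destruct (Hd y) as [Hfy Hgy]; [change (Rabs (y - a) < d); rewrite Rabs_right; lra | lra |].
change (Rabs (f y - l) < l / 2) in Hfy. change (Rabs (g y - l) < l / 2) in Hgy.
apply Rabs_lt_between in Hfy, Hgy. lra.
Qed.

Lemma linear_ode_integrating_factor (w k : R -> R) (a b c : R) :
  a < c < b ->
  (forall x, a < x < b -> continuous k x) ->
  (forall x, a < x < b -> is_derive w x (k x * w x)) ->
  forall x, a < x < b -> w x * exp (- RInt k c x) = w c.
Proof.
intros Hc Hk Hw.
set (I := fun x => RInt k c x).
assert (HI : forall x, a < x < b -> is_derive I x (k x)).
{ intros x Hx. apply (is_derive_RInt k I c x); [|apply Hk, Hx].
  assert (Hd : 0 < Rmin (x - a) (b - x)) by (apply Rmin_pos; lra).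
  exists (mkposreal _ Hd). intros y Hy. change (Rabs (y - x) < Rmin (x - a) (b - x)) in Hy.
  pose proof (Rmin_l (x - a) (b - x)). pose proof (Rmin_r (x - a) (b - x)).
  apply Rabs_lt_between in Hy.
  apply (RInt_correct (V := R_CompleteNormedModule)), ex_RInt_continuous_R.
  intros z Hz. apply Hk.
  pose proof (Rmin_glb_lt c y a ltac:(lra) ltac:(lra)).
  pose proof (Rmax_lub_lt c y b ltac:(lra) ltac:(lra)). lra. }
set (v := fun x => w x * exp (- I x)).
assert (Hv : forall x, a < x < b -> is_derive v x 0).
{ intros x Hx. unfold v. auto_derive.
  - split; [eexists; apply Hw, Hx | split; [eexists; apply HI, Hx | auto]].
  - replace (Derive (fun y => w y) x) with (k x * w x) by (symmetry; apply is_derive_unique, Hw, Hx).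
    replace (Derive (fun y => I y) x) with (k x) by (symmetry; apply is_derive_unique, HI, Hx).
    ring. }
assert (Hlt : forall x y, a < x -> x < y -> y < b -> v x = v y).
{ intros x y Hx Hxy Hy. destruct (mean_value_open v (fun _ => 0) x y Hxy) as [z [_ Hz]].
  - intros z Hz. apply Hv. lra.
  - intros z Hz. apply (ex_derive_continuous v). eexists. apply Hv. lra.
  - lra. }
assert (Hvc : v c = w c).
{ unfold v, I. replace (RInt k c c) with 0 by (rewrite RInt_point; reflexivity).
  rewrite Ropp_0, exp_0. ring. }
intros x Hx. change (v x = w c). rewrite <- Hvc.
destruct (Rtotal_order x c) as [h|[->|h]].
- apply Hlt; lra.
- reflexivity.
- symmetry; apply Hlt; lra.
Qed.

(* The integrating factor is bounded near [a], so [w c] is controlled by [w x] with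
   [x -> a]. *)
Lemma linear_ode_vanishes (w k : R -> R) (a b c K : R) :
  a < c < b ->
  (forall x, a < x < b -> continuous k x) ->
  (forall x, a < x <= c -> Rabs (k x) <= K) ->
  (forall x, a < x < b -> is_derive w x (k x * w x)) ->
  filterlim w (at_right a) (locally 0) ->
  forall x, a < x < b -> w x = 0.
Proof.
intros Hc Hk HK Hw Hw0.
pose proof (linear_ode_integrating_factor w k a b c Hc Hk Hw) as Hfac.
assert (HK0 : 0 <= K) by (pose proof (Rabs_pos (k c)); pose proof (HK c ltac:(lra)); lra).
set (E := exp (K * (c - a))).
assert (HE : 0 < E) by apply exp_pos.
assert (Hbound : forall x, a < x < c -> Rabs (w c) <= Rabs (w x) * E).
{ intros x Hx. rewrite <- (Hfac x), Rabs_mult, (Rabs_right (exp _)) by (lra || (left; apply exp_pos)).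
  apply Rmult_le_compat_l; [apply Rabs_pos|]. unfold E.
  assert (Rabs (RInt k c x) <= (c - x) * K).
  { rewrite <- opp_RInt_swap, Rabs_Ropp.
    - apply abs_RInt_le_const; [lra | apply ex_RInt_continuous_R | intros; apply HK; lra].
      intros z Hz. rewrite Rmin_left, Rmax_right in Hz by lra. apply Hk. lra.
    - apply ex_RInt_continuous_R. intros z Hz. rewrite Rmin_left, Rmax_right in Hz by lra.
      apply Hk. lra. }
  assert ((c - x) * K <= K * (c - a)) by nra.
  pose proof (Rle_abs (- RInt k c x)). rewrite Rabs_Ropp in *.
  destruct (Req_dec (- RInt k c x) (K * (c - a))) as [->|]; [lra | left; apply exp_increasing; lra]. }
assert (Hwc : w c = 0).
{ apply Rabs_eq_0, Rle_antisym; [|apply Rabs_pos]. apply Rle_plus_epsilon. intros eps Heps.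
  assert (He : 0 < eps / E) by (apply Rdiv_lt_0_compat; lra).
  assert (Hev : at_right a (fun x => a < x < c /\ Rabs (w x) < eps / E)).
  { assert (Hd : 0 < c - a) by lra.
    apply filter_and; [exists (mkposreal _ Hd); intros y Hy Hay;
                        change (Rabs (y - a) < c - a) in Hy; apply Rabs_lt_between in Hy; lra|].
    apply (filter_imp (fun x => ball 0 (mkposreal _ He) (w x)));
      [intros x Hx; change (Rabs (w x - 0) < eps / E) in Hx; rewrite Rminus_0_r in Hx; exact Hx|].
    apply Hw0, locally_ball. }
  destruct (filter_ex _ Hev) as [x [Hx Hwx]].
  pose proof (Hbound x Hx).
  assert (Rabs (w x) * E < eps) by (apply Rmult_lt_reg_r with (/ E);
    [apply Rinv_0_lt_compat; lra | rewrite Rmult_assoc, Rinv_r, Rmult_1_r by lra; exact Hwx]).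
  lra. }
intros x Hx. pose proof (Hfac x Hx) as Hvx. rewrite Hwc in Hvx.
apply Rmult_integral in Hvx as [|Hexp]; [assumption|].
pose proof (exp_pos (- RInt k c x)). lra.
Qed.

(** * The hodograph transformation *)

Section Hodograph.

Variables (s x0 g0 : R) (P : R -> R).
Hypothesis Hs : 0 < s.
Hypothesis Hx0 : 0 < x0.
Hypothesis HP1 : forall x, x0 <= x -> ex_derive P x /\ continuous (Derive P) x.
Hypothesis HPmono : forall x y, x0 <= x -> x <= y -> P x <= P y.
Hypothesis Hg0 : 0 < g0.
Hypothesis Hgc : g0 + g0 ^ 2 < P x0.

Definition gap := P x0 - g0 - g0 ^ 2.
Definition rate := s * g0 / gap.
(* Since [x' <= rate x], [x t <= x0 exp (rate t) < xmax] for [t <= g0]. *)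
Definition xmax := x0 * exp (rate * g0) + 1.

Lemma gap_pos : 0 < gap.
Proof. unfold gap. lra. Qed.

Lemma rate_pos : 0 < rate.
Proof. pose proof gap_pos. unfold rate. apply Rdiv_lt_0_compat; nra. Qed.

Lemma x0_lt_xmax : x0 < xmax.
Proof.
unfold xmax. assert (1 <= exp (rate * g0)).
{ rewrite <- exp_0. pose proof rate_pos. destruct (Req_dec (rate * g0) 0) as [->|]; [lra|].
  left; apply exp_increasing; nra. }
nra.
Qed.

Lemma P_pos x : x0 <= x -> 0 < P x.
Proof. intros h. pose proof (HPmono x0 x ltac:(lra) h). pose proof (pow2_ge_0 g0). lra. Qed.

(* With [t = g0 - gamma] as independent variable, [x(t)] solves
   [x' = s x gamma / (P x - gamma - gamma^2)]; the field is truncated outside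
   [0 <= t <= g0] and [x0 <= x <= xmax] so that it is globally bounded and Lipschitz. *)
Definition hodo_gamma t := clamp 0 g0 (g0 - t).
Definition hodo_x y := clamp x0 xmax y.
Definition hodo_den t y := P (hodo_x y) - hodo_gamma t - hodo_gamma t ^ 2.
Definition hodo_field t y := s * hodo_x y * hodo_gamma t / hodo_den t y.

Lemma hodo_gamma_range t : 0 <= hodo_gamma t <= g0.
Proof. apply clamp_range; lra. Qed.

Lemma hodo_x_range y : x0 <= hodo_x y <= xmax.
Proof. apply clamp_range. pose proof x0_lt_xmax. lra. Qed.

Lemma hodo_den_bounds t y : gap <= hodo_den t y <= P xmax.
Proof.
pose proof (hodo_gamma_range t). pose proof (hodo_x_range y).
pose proof (HPmono x0 (hodo_x y) ltac:(lra) ltac:(lra)).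
pose proof (HPmono (hodo_x y) xmax ltac:(lra) ltac:(lra)).
unfold hodo_den, gap. split; nra.
Qed.

Lemma hodo_field_nonneg t y : 0 <= hodo_field t y.
Proof.
pose proof (hodo_gamma_range t). pose proof (hodo_x_range y).
pose proof (hodo_den_bounds t y). pose proof gap_pos.
unfold hodo_field. apply Rmult_le_pos; [apply Rmult_le_pos; [apply Rmult_le_pos|]; lra | left; apply Rinv_0_lt_compat; lra].
Qed.

Lemma hodo_field_le t y : hodo_field t y <= rate * hodo_x y.
Proof.
pose proof (hodo_gamma_range t). pose proof (hodo_x_range y).
pose proof (hodo_den_bounds t y). pose proof gap_pos.
unfold hodo_field, rate. set (d := hodo_den t y) in *.
apply Rmult_le_reg_r with (d * gap); [nra|].
unfold Rdiv. replace (s * hodo_x y * hodo_gamma t * / d * (d * gap))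
  with (s * hodo_x y * hodo_gamma t * gap) by (field; lra).
replace (s * g0 * / gap * hodo_x y * (d * gap)) with (s * hodo_x y * g0 * d) by (field; lra).
assert (0 <= s * hodo_x y) by nra.
apply Rmult_le_compat; nra.
Qed.

Lemma hodo_field_bound t y : Rabs (hodo_field t y) <= rate * xmax.
Proof.
rewrite Rabs_right by (apply Rle_ge, hodo_field_nonneg).
eapply Rle_trans; [apply hodo_field_le|].
pose proof rate_pos. pose proof (hodo_x_range y). nra.
Qed.

Lemma hodo_field_lipschitz : exists L, 0 < L /\
  forall t y1 y2, Rabs (hodo_field t y1 - hodo_field t y2) <= L * Rabs (y1 - y2).
Proof.
pose proof x0_lt_xmax. pose proof gap_pos.
destruct (C1_lipschitz_on P x0 xmax) as [Lp [HLp0 HLp]]; [lra | intros x Hx; apply HP1; lra|].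
assert (HPx : 0 < P xmax) by (apply P_pos; lra).
set (C := xmax * Lp + P xmax).
assert (HC : 0 < C) by (unfold C; nra).
exists (s * g0 * C / gap ^ 2 + 1). split.
{ assert (0 <= s * g0 * C / gap ^ 2) by
    (apply Rmult_le_pos; [apply Rmult_le_pos; [apply Rmult_le_pos|]; lra | left; apply Rinv_0_lt_compat; nra]).
  lra. }
intros t y1 y2.
pose proof (hodo_gamma_range t). pose proof (hodo_x_range y1). pose proof (hodo_x_range y2).
pose proof (hodo_den_bounds t y1). pose proof (hodo_den_bounds t y2).
pose proof (clamp_lipschitz x0 xmax y1 y2) as Hxy. fold (hodo_x y1) (hodo_x y2) in Hxy.
unfold hodo_field.
set (u := hodo_x y1) in *. set (v := hodo_x y2) in *. set (r := hodo_gamma t) in *.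
set (du := hodo_den t y1) in *. set (dv := hodo_den t y2) in *.
assert (Hdu : du = P u - r - r ^ 2) by reflexivity. assert (Hdv : dv = P v - r - r ^ 2) by reflexivity.
replace (s * u * r / du - s * v * r / dv)
  with (s * r / (du * dv) * (u * (P v - P u) + (u - v) * du))
  by (rewrite Hdu, Hdv in *; field; lra).
assert (Hnum : Rabs (u * (P v - P u) + (u - v) * du) <= C * Rabs (u - v)).
{ eapply Rle_trans; [apply Rabs_triang|]. rewrite !Rabs_mult, (Rabs_right u), (Rabs_right du) by lra.
  pose proof (HLp v u ltac:(lra) ltac:(lra)). rewrite (Rabs_minus_sym v u) in *.
  pose proof (Rabs_pos (P v - P u)). pose proof (Rabs_pos (u - v)).
  unfold C. nra. }
assert (Hfac : Rabs (s * r / (du * dv)) <= s * g0 / gap ^ 2).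
{ rewrite Rabs_right by (apply Rle_ge, Rmult_le_pos; [nra | left; apply Rinv_0_lt_compat; nra]).
  unfold Rdiv. apply Rmult_le_compat; [nra | left; apply Rinv_0_lt_compat; nra | nra |].
  apply Rinv_le_contravar; nra. }
rewrite Rabs_mult. pose proof (Rabs_pos (s * r / (du * dv))). pose proof (Rabs_pos (y1 - y2)).
pose proof (Rabs_pos (u * (P v - P u) + (u - v) * du)).
assert (0 <= s * g0 / gap ^ 2) by (apply Rmult_le_pos; [nra | left; apply Rinv_0_lt_compat; nra]).
apply Rle_trans with (s * g0 / gap ^ 2 * (C * Rabs (y1 - y2))).
- apply Rmult_le_compat; auto. eapply Rle_trans; [exact Hnum|]. apply Rmult_le_compat_l; lra.
- unfold Rdiv. nra.
Qed.

Lemma hodo_field_continuous y t : continuous (fun t => hodo_field t y) t.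
Proof.
unfold hodo_field, hodo_den.
apply (continuous_comp hodo_gamma (fun r => s * hodo_x y * r / (P (hodo_x y) - r - r ^ 2))).
- apply (lipschitz_continuous _ 1). intros u v. rewrite Rmult_1_l. unfold hodo_gamma.
  eapply Rle_trans; [apply clamp_lipschitz|]. right. rewrite <- Rabs_Ropp. f_equal. ring.
- pose proof (hodo_den_bounds t y). pose proof gap_pos.
  apply (ex_derive_continuous (fun r => s * hodo_x y * r / (P (hodo_x y) - r - r ^ 2))).
  auto_derive. unfold hodo_den in *. lra.
Qed.

Lemma hodograph_solution_exists : exists X : R -> R, X 0 = x0 /\
  (forall t, continuous X t) /\ (forall t, 0 < t -> is_derive X t (hodo_field t (X t))).
Proof.
destruct hodo_field_lipschitz as [L [HL HLip]].
exact (global_picard hodo_field x0 L (rate * xmax) HL hodo_field_bound HLip hodo_field_continuous).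
Qed.

Section Solution.

Variable X : R -> R.
Hypothesis HX0 : X 0 = x0.
Hypothesis HXc : forall t, continuous X t.
Hypothesis HXd : forall t, 0 < t -> is_derive X t (hodo_field t (X t)).

Lemma X_le_mono t t' : 0 <= t -> t <= t' -> X t <= X t'.
Proof.
intros h1 h2. destruct (Req_dec t t') as [<-|]; [lra|].
destruct (mean_value_open X (fun u => hodo_field u (X u)) t t') as [c [Hc Heq]];
  [lra | intros; apply HXd; lra | intros; apply HXc|].
pose proof (hodo_field_nonneg c (X c)). nra.
Qed.

Lemma X_ge_x0 t : 0 <= t -> x0 <= X t.
Proof. intros h. rewrite <- HX0. apply X_le_mono; lra. Qed.

Lemma X_le_exp t : 0 <= t -> X t <= x0 * exp (rate * t).
Proof.
intros h. destruct (Req_dec t 0) as [->|Ht]; [rewrite HX0, Rmult_0_r, exp_0; lra|].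
set (Y := fun u => X u * exp (- (rate * u))).
set (dY := fun u => (hodo_field u (X u) - rate * X u) * exp (- (rate * u))).
destruct (mean_value_open Y dY 0 t) as [c [Hc Heq]]; [lra | | |].
- intros c Hc. unfold Y, dY. auto_derive; [eexists; apply HXd; lra|].
  replace (Derive (fun u => X u) c) with (hodo_field c (X c))
    by (symmetry; apply is_derive_unique, HXd; lra).
  ring.
- intros c _. apply (continuous_mult X (fun u => exp (- (rate * u)))); [apply HXc|].
  apply (ex_derive_continuous (fun u => exp (- (rate * u)))). auto_derive. auto.
- assert (HdY : dY c <= 0).
  { unfold dY. pose proof (hodo_field_le c (X c)).
    pose proof (clamp_le_self x0 xmax (X c) (X_ge_x0 c ltac:(lra))). fold (hodo_x (X c)) in *.
    pose proof rate_pos. pose proof (exp_pos (- (rate * c))).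
    apply Rmult_le_0_r; [nra | lra]. }
  unfold Y in Heq. rewrite HX0, Rmult_0_r, Ropp_0, exp_0 in Heq.
  replace (X t) with (Y t * exp (rate * t))
    by (unfold Y; rewrite Rmult_assoc, <- exp_plus, Rplus_opp_l, exp_0; ring).
  apply Rmult_le_compat_r; [left; apply exp_pos|]. unfold Y. nra.
Qed.

Lemma X_lt_xmax t : 0 <= t <= g0 -> X t < xmax.
Proof.
intros h. eapply Rle_lt_trans; [apply X_le_exp; lra|]. unfold xmax.
assert (exp (rate * t) <= exp (rate * g0)).
{ pose proof rate_pos. destruct (Req_dec t g0) as [->|]; [lra | left; apply exp_increasing; nra]. }
nra.
Qed.

Definition hodo_speed t := s * X t * (g0 - t) / (P (X t) - (g0 - t) - (g0 - t) ^ 2).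

Lemma hodo_field_X t : 0 <= t <= g0 -> hodo_field t (X t) = hodo_speed t.
Proof.
intros h. unfold hodo_field, hodo_den, hodo_speed, hodo_x, hodo_gamma.
rewrite !clamp_id; auto; [lra|]. pose proof (X_ge_x0 t (proj1 h)). pose proof (X_lt_xmax t h). lra.
Qed.

Lemma hodo_speed_den t : 0 <= t <= g0 -> gap <= P (X t) - (g0 - t) - (g0 - t) ^ 2.
Proof.
intros h. pose proof (hodo_den_bounds t (X t)) as [Hd _].
unfold hodo_den, hodo_x, hodo_gamma in Hd.
rewrite !clamp_id in Hd; auto; [lra|]. pose proof (X_ge_x0 t (proj1 h)). pose proof (X_lt_xmax t h). lra.
Qed.

Lemma hodo_speed_pos t : 0 <= t < g0 -> 0 < hodo_speed t.
Proof.
intros h. pose proof (hodo_speed_den t ltac:(lra)). pose proof gap_pos. pose proof (X_ge_x0 t (proj1 h)).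
unfold hodo_speed. apply Rdiv_lt_0_compat; [apply Rmult_lt_0_compat; [nra|] |]; lra.
Qed.

Lemma X_lt_mono t t' : 0 <= t -> t < t' -> t' <= g0 -> X t < X t'.
Proof.
intros h1 h2 h3.
destruct (mean_value_open X (fun u => hodo_field u (X u)) t t') as [c [Hc Heq]];
  [lra | intros; apply HXd; lra | intros; apply HXc|].
rewrite hodo_field_X in Heq by lra. pose proof (hodo_speed_pos c ltac:(lra)). nra.
Qed.

Definition x1 := X g0.

Lemma x0_lt_x1 : x0 < x1.
Proof. unfold x1. rewrite <- HX0. apply X_lt_mono; lra. Qed.

(* Continued with slope 1 outside [0, g0], [X] becomes a strictly increasing bijection of
   [R], hence has a global inverse. *)
Definition Xext t := X (clamp 0 g0 t) + (t - clamp 0 g0 t).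

Lemma Xext_continuous t : continuous Xext t.
Proof.
assert (Hcl : forall t, continuous (clamp 0 g0) t).
{ apply (lipschitz_continuous _ 1). intros. rewrite Rmult_1_l. apply clamp_lipschitz. }
apply (continuous_plus (fun t => X (clamp 0 g0 t))).
- apply (continuous_comp (clamp 0 g0) X); [apply Hcl | apply HXc].
- apply (continuous_minus (fun t => t) (clamp 0 g0)); [apply continuous_id | apply Hcl].
Qed.

Lemma Xext_X t : 0 <= t <= g0 -> Xext t = X t.
Proof. intros h. unfold Xext. rewrite clamp_id by auto. ring. Qed.

Lemma Xext_lt_mono t t' : t < t' -> Xext t < Xext t'.
Proof.
intros h. unfold Xext. pose proof (clamp_increment 0 g0 t t' ltac:(lra)).
pose proof (clamp_range 0 g0 t ltac:(lra)). pose proof (clamp_range 0 g0 t' ltac:(lra)).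
destruct (Req_dec (clamp 0 g0 t) (clamp 0 g0 t')) as [e|ne].
- rewrite e. lra.
- pose proof (X_lt_mono (clamp 0 g0 t) (clamp 0 g0 t') ltac:(lra) ltac:(lra) ltac:(lra)). lra.
Qed.

Lemma Xext_inv_sig y : {t | Xext t = y}.
Proof.
set (lo := Rmin 0 (y - x0)). set (hi := Rmax g0 (y - x1 + g0)).
assert (Hlo : Xext lo <= y).
{ unfold Xext. rewrite clamp_left by (unfold lo; pose proof (Rmin_l 0 (y - x0)); lra).
  rewrite HX0. pose proof (Rmin_r 0 (y - x0)). unfold lo. lra. }
assert (Hhi : y <= Xext hi).
{ unfold Xext. rewrite clamp_right by (unfold hi; pose proof (Rmax_l g0 (y - x1 + g0)); lra).
  fold x1. pose proof (Rmax_r g0 (y - x1 + g0)). unfold hi. lra. }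
destruct (IVT_gen Xext lo hi y) as [t [_ Ht]].
- intros u. apply continuity_pt_filterlim, Xext_continuous.
- split; [eapply Rle_trans; [apply Rmin_l | exact Hlo] | eapply Rle_trans; [exact Hhi | apply Rmax_r]].
- exists t; exact Ht.
Qed.

Definition Xinv y := proj1_sig (Xext_inv_sig y).

Lemma Xext_Xinv y : Xext (Xinv y) = y.
Proof. exact (proj2_sig (Xext_inv_sig y)). Qed.

Lemma Xinv_Xext t : Xinv (Xext t) = t.
Proof.
pose proof (Xext_Xinv (Xext t)). destruct (Rtotal_order (Xinv (Xext t)) t) as [h|[h|h]]; auto;
  apply Xext_lt_mono in h; lra.
Qed.

Lemma Xinv_lt_mono y y' : y < y' -> Xinv y < Xinv y'.
Proof.
intros h. destruct (Rlt_le_dec (Xinv y) (Xinv y')) as [|h']; auto.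
destruct (Req_dec (Xinv y) (Xinv y')) as [e|ne].
- apply (f_equal Xext) in e. rewrite !Xext_Xinv in e. lra.
- pose proof (Xext_lt_mono (Xinv y') (Xinv y) ltac:(lra)). rewrite !Xext_Xinv in *. lra.
Qed.

Lemma Xinv_continuous y : continuity_pt Xinv y.
Proof.
set (t := Xinv y).
assert (Hle : forall y y', y <= y' -> Xinv y <= Xinv y').
{ intros u u' h. destruct (Req_dec u u') as [->|]; [lra|]. left; apply Xinv_lt_mono; lra. }
apply (continuity_pt_recip_interv Xext Xinv (t - 1) (t + 1)); [lra | | | | |].
- intros; apply Xext_lt_mono; lra.
- intros; apply Xext_Xinv.
- intros z h1 h2. apply Hle in h1. apply Hle in h2. rewrite !Xinv_Xext in *. lra.
- intros; apply continuity_pt_filterlim, Xext_continuous.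
- pose proof (Xext_lt_mono (t - 1) t ltac:(lra)). pose proof (Xext_lt_mono t (t + 1) ltac:(lra)).
  unfold t in *. rewrite Xext_Xinv in *. lra.
Qed.

Lemma Xinv_x0 : Xinv x0 = 0.
Proof. rewrite <- HX0, <- (Xext_X 0) by lra. apply Xinv_Xext. Qed.

Lemma Xinv_x1 : Xinv x1 = g0.
Proof. unfold x1. rewrite <- (Xext_X g0) by lra. apply Xinv_Xext. Qed.

Lemma Xinv_range x : x0 < x < x1 -> 0 < Xinv x < g0.
Proof.
intros h. pose proof (Xinv_lt_mono _ _ (proj1 h)). pose proof (Xinv_lt_mono _ _ (proj2 h)).
rewrite Xinv_x0, Xinv_x1 in *. lra.
Qed.

Lemma Xext_derive t : 0 < t < g0 -> is_derive Xext t (hodo_speed t).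
Proof.
intros h. apply (is_derive_ext_loc X).
- assert (Hd : 0 < Rmin t (g0 - t)) by (apply Rmin_pos; lra).
  exists (mkposreal _ Hd). intros u Hu. change (Rabs (u - t) < Rmin t (g0 - t)) in Hu.
  pose proof (Rmin_l t (g0 - t)). pose proof (Rmin_r t (g0 - t)). apply Rabs_lt_between in Hu.
  symmetry; apply Xext_X; lra.
- rewrite <- hodo_field_X by lra. apply HXd; lra.
Qed.

Lemma Xinv_derive x : x0 < x < x1 -> derivable_pt_lim Xinv x (1 / hodo_speed (Xinv x)).
Proof.
intros Hx. pose proof (Xinv_range x Hx) as Ht. set (t := Xinv x) in *.
set (d := Rmin t (g0 - t) / 2).
assert (Hd : 0 < d) by (unfold d; pose proof (Rmin_pos t (g0 - t) ltac:(lra) ltac:(lra)); lra).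
assert (Hd1 : d < t) by (unfold d; pose proof (Rmin_l t (g0 - t)); lra).
assert (Hd2 : t + d < g0) by (unfold d; pose proof (Rmin_r t (g0 - t)); lra).
set (lb := Xext (t - d)). set (ub := Xext (t + d)).
assert (Prf : forall u, Xinv lb <= u <= Xinv ub -> derivable_pt Xext u).
{ intros u Hu. unfold lb, ub in Hu. rewrite !Xinv_Xext in Hu.
  exists (hodo_speed u). apply is_derive_Reals, Xext_derive. lra. }
assert (Hincr : Xinv lb <= Xinv x <= Xinv ub) by (unfold lb, ub; rewrite !Xinv_Xext; fold t; lra).
assert (Hval : derive_pt Xext (Xinv x) (Prf (Xinv x) Hincr) = hodo_speed t)
  by (apply derive_pt_eq_0, is_derive_Reals, Xext_derive; fold t; lra).
rewrite <- Hval. apply derivable_pt_lim_recip_interv.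
- apply Xinv_continuous.
- apply Xext_lt_mono; lra.
- unfold lb, ub. rewrite <- (Xext_Xinv x). fold t. split; apply Xext_lt_mono; lra.
- intros y _. apply Xext_Xinv.
- rewrite Hval. pose proof (hodo_speed_pos t ltac:(lra)). lra.
Qed.

Definition gamma1 x := g0 - Xinv x.

Lemma gamma1_continuous x : continuous gamma1 x.
Proof.
apply (continuous_minus (fun _ => g0) Xinv); [apply continuous_const|].
apply continuity_pt_filterlim, Xinv_continuous.
Qed.

Lemma gamma1_x0 : gamma1 x0 = g0.
Proof. unfold gamma1. rewrite Xinv_x0. ring. Qed.

Lemma gamma1_x1 : gamma1 x1 = 0.
Proof. unfold gamma1. rewrite Xinv_x1. ring. Qed.

Lemma gamma1_pos x : x0 < x < x1 -> 0 < gamma1 x.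
Proof. intros h. pose proof (Xinv_range x h). unfold gamma1. lra. Qed.

Lemma gamma1_derive x : x0 < x < x1 -> is_derive gamma1 x (ode_rhs P s x (gamma1 x)).
Proof.
intros Hx. pose proof (Xinv_range x Hx) as Ht.
pose proof (proj2 (is_derive_Reals _ _ _) (Xinv_derive x Hx)) as H.
replace (ode_rhs P s x (gamma1 x)) with (minus 0 (1 / hodo_speed (Xinv x))).
- exact (is_derive_minus (fun _ => g0) Xinv x 0 _ (is_derive_const g0 x) H).
- unfold gamma1, ode_rhs, hodo_speed. set (t := Xinv x) in *.
  assert (Hxe : x = X t) by (rewrite <- (Xext_Xinv x); apply Xext_X; lra).
  rewrite Hxe. pose proof (hodo_speed_den t ltac:(lra)). pose proof gap_pos.
  pose proof (X_ge_x0 t ltac:(lra)).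
  unfold minus, plus, opp; simpl. field. repeat split; lra.
Qed.

Lemma pos_solution_eq_gamma1 (g : R -> R) :
  filterlim g (at_right x0) (locally g0) ->
  (forall x, x0 < x < x1 -> 0 < g x /\ is_derive g x (ode_rhs P s x (g x))) ->
  forall x, x0 < x < x1 -> g x = gamma1 x.
Proof.
intros Hlim Hg. pose proof x0_lt_x1.
assert (Hlim1 : filterlim gamma1 (at_right x0) (locally g0))
  by (rewrite <- gamma1_x0; apply filterlim_at_right_continuous, gamma1_continuous).
destruct (filterlim_at_right_ge_half gamma1 g x0 x1 g0) as [c [Hc Hnear]]; auto.
set (k := fun y => 2 * ((1 + P y / (gamma1 y * g y)) / (s * y))).
set (K := 2 * ((1 + P c / (g0 / 2) ^ 2) / (s * x0))).
assert (Hsol : forall y, x0 < y < x1 -> is_derive gamma1 y (ode_rhs P s y (gamma1 y)) /\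
                                     is_derive g y (ode_rhs P s y (g y)) /\ 0 < gamma1 y /\ 0 < g y)
  by (intros y Hy; pose proof (Hg y Hy); pose proof (gamma1_pos y Hy); pose proof (gamma1_derive y Hy); tauto).
intros x Hx.
assert (Hw : (gamma1 x - g x) ^ 2 = 0).
{ apply (linear_ode_vanishes (fun y => (gamma1 y - g y) ^ 2) k x0 x1 c K); auto.
  - intros y Hy. destruct (Hsol y Hy) as [H1 [H2 [H3 H4]]].
    apply (ex_derive_continuous k). unfold k. auto_derive.
    repeat split; try (eexists; eassumption); try (apply HP1; lra); nra.
  - intros y Hy. destruct (Hnear y Hy) as [H1 H2]. pose proof (P_pos y ltac:(lra)).
    pose proof (HPmono y c ltac:(lra) ltac:(lra)).
    assert (Hq : 0 <= P y / (gamma1 y * g y) <= P c / (g0 / 2) ^ 2).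
    { split; [apply Rmult_le_pos; [lra | left; apply Rinv_0_lt_compat; nra]|].
      unfold Rdiv. apply Rmult_le_compat; [lra | left; apply Rinv_0_lt_compat; nra | lra|].
      apply Rinv_le_contravar; nra. }
    assert (Hr : 0 < / (s * y) <= / (s * x0))
      by (split; [apply Rinv_0_lt_compat; nra | apply Rinv_le_contravar; nra]).
    unfold k, K, Rdiv. rewrite Rabs_right; [apply Rmult_le_compat_l; [lra|]; apply Rmult_le_compat; lra|].
    apply Rle_ge, Rmult_le_pos; [lra | apply Rmult_le_pos; lra].
  - intros y Hy. destruct (Hsol y Hy) as [H1 [H2 [H3 H4]]]. auto_derive.
    + split; [eexists; exact H1 | split; [eexists; exact H2 | exact I]].
    + replace (Derive (fun z => gamma1 z) y) with (ode_rhs P s y (gamma1 y))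
        by (symmetry; apply is_derive_unique; exact H1).
      replace (Derive (fun z => g z) y) with (ode_rhs P s y (g y))
        by (symmetry; apply is_derive_unique; exact H2).
      unfold k, ode_rhs. field. repeat split; apply Rgt_not_eq; nra.
  - apply (filterlim_sqr_sub gamma1 g g0); auto. }
nra.
Qed.

Lemma pos_solution_ends_before_x1 (g : R -> R) (b : R) : x1 < b ->
  filterlim g (at_right x0) (locally g0) ->
  (forall x, x0 < x < b -> 0 < g x /\ is_derive g x (ode_rhs P s x (g x))) -> False.
Proof.
intros Hb Hlim Hg. pose proof x0_lt_x1.
destruct (Hg x1 ltac:(lra)) as [Hpos Hd].
assert (Hleft : filterlim g (at_left x1) (locally 0)).
{ rewrite <- gamma1_x1. apply (filterlim_ext_loc gamma1).
  - assert (Hdx : 0 < x1 - x0) by lra. exists (mkposreal _ Hdx). intros y Hy Hyx1.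
    change (Rabs (y - x1) < x1 - x0) in Hy. apply Rabs_lt_between in Hy.
    symmetry; apply (pos_solution_eq_gamma1 g Hlim); [intros z Hz; apply Hg|]; lra.
  - apply filterlim_at_left_continuous, gamma1_continuous. }
assert (Hcont : filterlim g (at_left x1) (locally (g x1)))
  by (apply filterlim_at_left_continuous, (ex_derive_continuous g); eexists; exact Hd).
assert (Heps : 0 < g x1 / 2) by lra.
destruct (filter_ex _ (filter_and _ _ (proj1 (filterlim_locally _ _) Hcont (mkposreal _ Heps))
                                      (proj1 (filterlim_locally _ _) Hleft (mkposreal _ Heps))))
  as [y [H1 H2]].
change (Rabs (g y - g x1) < g x1 / 2) in H1. change (Rabs (g y - 0) < g x1 / 2) in H2.
apply Rabs_lt_between in H1, H2. lra.
Qed.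

Lemma gamma1_maximal_pos_solution : exists x1 : R, x0 < x1 /\
  (exists g : R -> R, is_pos_solution P s x0 g0 g (Finite x1) /\
     filterlim g (at_left x1) (locally 0)) /\
  (forall (g : R -> R) (b : Rbar), is_pos_solution P s x0 g0 g b -> Rbar_le b (Finite x1)).
Proof.
pose proof x0_lt_x1. exists x1. split; [assumption|]. split.
- exists gamma1. split; [split; [|split; [|split]]|].
  + exact H.
  + exact gamma1_x0.
  + rewrite <- gamma1_x0. apply filterlim_at_right_continuous, gamma1_continuous.
  + intros x Hx Hxb. simpl in Hxb. split; [apply gamma1_pos | apply gamma1_derive]; lra.
  + rewrite <- gamma1_x1. apply filterlim_at_left_continuous, gamma1_continuous.
- intros g b [_ [_ [Hlim Hg]]]. destruct b as [b| |]; simpl; [| |exact I].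
  + destruct (Rle_dec b x1) as [|Hgt]; [assumption|]. exfalso.
    apply (pos_solution_ends_before_x1 g b); [lra | exact Hlim | intros x Hx; apply Hg; simpl; lra].
  + exfalso. apply (pos_solution_ends_before_x1 g (x1 + 1)); [lra | exact Hlim|].
    intros x Hx. apply Hg; simpl; lra.
Qed.

End Solution.

Theorem pos_solution_vanishes_at_finite_x : exists x1 : R, x0 < x1 /\
  (exists g : R -> R, is_pos_solution P s x0 g0 g (Finite x1) /\
     filterlim g (at_left x1) (locally 0)) /\
  (forall (g : R -> R) (b : Rbar), is_pos_solution P s x0 g0 g b -> Rbar_le b (Finite x1)).
Proof.
destruct hodograph_solution_exists as [X [HX0 [HXc HXd]]].
apply (gamma1_maximal_pos_solution X); assumption.
Qed.

End Hodograph.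

Lemma add_sqr_lt_of_lt_gamma_c P x g : 0 <= P x -> 0 <= g -> g < gamma_c P x -> g + g ^ 2 < P x.
Proof.
intros HP Hg Hlt. unfold gamma_c in Hlt.
assert (HS : sqrt (1 + 4 * P x) * sqrt (1 + 4 * P x) = 1 + 4 * P x) by (apply sqrt_sqrt; lra).
assert (2 * g + 1 < sqrt (1 + 4 * P x)) by lra.
nra.
Qed.

Theorem lemma1 (s x0 g0 : R) (P : R -> R) :
  0 < s -> 0 < x0 ->
  C2_on_nonneg P ->
  strictly_increasing_nonneg P ->
  P 0 = 0 ->
  (forall x, 0 < x -> 0 < P x) ->
  ex_RInt_gen (fun z => P z * Rpower z (-1 - 2 / s))
    (at_point x0) (Rbar_locally p_infty) ->
  0 < g0 -> g0 < gamma_c P x0 ->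
  exists x1 : R, x0 < x1 /\
    (exists g : R -> R, is_pos_solution P s x0 g0 g (Finite x1) /\
        filterlim g (at_left x1) (locally 0)) /\
    (forall (g : R -> R) (b : Rbar), is_pos_solution P s x0 g0 g b ->
        Rbar_le b (Finite x1)).
Proof.
intros Hs Hx0 HC2 Hinc _ HPpos _ Hg0 Hgc.
apply pos_solution_vanishes_at_finite_x; [assumption | assumption | | | assumption |].
- intros x Hx. destruct (HC2 x ltac:(lra)) as [HP [HDP _]].
  split; [exact HP | apply (ex_derive_continuous (Derive P)), HDP].
- intros x y Hx Hxy. destruct (Req_dec x y) as [->|]; [lra | left; apply Hinc; lra].
- apply add_sqr_lt_of_lt_gamma_c; [pose proof (HPpos x0 Hx0) | |]; lra.
Qed.
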